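(* Fix $K\ge 1$. There is a constant $C_K$ depending only on $K$ such that, for all integers $n\ge K$ and $N>1$, all $\epsilon\in(0,1)$ and all $\delta\in(0,1/2]$, the total number of pulls made by MedianElimination (described in the context) with parameters $K,\epsilon,\delta$ on any MAB-BP instance with $n$ arms and reward lists of length $N$ is at most $$C_K\,\frac{n\sqrt{N}}{\epsilon}\sqrt{\log\frac1\delta}\,,$$ i.e. the time complexity is $O\!\left(\frac{n\sqrt N}{\epsilon}\sqrt{\log(1/\delta)}\right)$.
   Context: Multi-Armed Bandit with Bounded Pulls (MAB-BP): there are $n$ arms $a_1,\dots,a_n$; arm $a_i$ has a reward list $R_i=(R_i^{(1)},\dots,R_i^{(N)})$ with $R_i^{(j)}\in[0,1]$, and true mean $p_i=\frac1N\sum_{j=1}^N R_i^{(j)}$. Each pull of arm $a_i$ returns a value drawn uniformly at random without replacement from the entries of $R_i$ not yet returned. Define for $u>0$ $$m(u)=\min\left\{\frac{u+1}{1+\frac{u}{N}},\ \frac{u+\frac{u}{N}}{1+\frac{u}{N}}\right\}.$$ Algorithm MedianElimination (input $K\ge1$, $\epsilon>0$, $\delta>0$, arm set $A$): set $S_1=A$, $\epsilon_1=\epsilon/4$, $\delta_1=\delta/2$, $l=1$, $t_0=0$. While $|S_l|>K$: set $$t_l=\left\lceil m\!\left(\frac{2}{\epsilon_l^2}\log\frac{2(|S_l|-K)}{\delta_l\left(\left\lfloor\frac{|S_l|-K}{2}\right\rfloor+1\right)}\right)\right\rceil;$$ pull every arm $a\in S_l$ an additional $t_l-t_{l-1}$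 times, and let $\hat p^l_a$ be the empirical mean of all $t_l$ rewards obtained from $a$ since the start; remove from $S_l$ the $\left\lceil\frac{|S_l|-K}{2}\right\rceil$ arms with the smallest values of $\hat p^l_a$ to obtain $S_{l+1}$; set $\epsilon_{l+1}=\frac34\epsilon_l$, $\delta_{l+1}=\frac12\delta_l$, $l\leftarrow l+1$. When the loop ends, return $S_l$. *)

From Stdlib Require Import Reals Lra Lia Arith.
Open Scope R_scope.

Definition m_fun (N : nat) (u : R) : R :=
  Rmin ((u + 1) / (1 + u / INR N)) ((u + u / INR N) / (1 + u / INR N)).

(* ceiling of a real, as an integer: up x is the unique integer with
   x < up x <= x + 1. *)
Definition ceilZ (x : R) : Z :=
  let z := up x in
  if Req_EM_T (IZR z - 1) x then (z - 1)%Z else z.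

Definition t_round (K N s : nat) (epsl deltal : R) : nat :=
  Z.to_nat (ceilZ (m_fun N
    ((2 / (epsl ^ 2)) *
     ln ((2 * INR (s - K)) / (deltal * INR ((s - K) / 2 + 1)))))).

(* Number of pulls made by the rounds of MedianElimination, starting from a
   round with |S_l| = s, current eps_l, delta_l, and t_{l-1} = tprev.
   In each round every arm of S_l is pulled t_l - t_{l-1} additional times,
   then ceil((|S_l|-K)/2) = (s - K + 1)/2 arms are removed.
   [fuel] bounds the number of rounds (each round removes at least one arm,
   so fuel = n suffices). *)
Fixpoint me_pulls (fuel K N s : nat) (epsl deltal : R) (tprev : nat) : nat :=
  match fuel with
  | O => O
  | S f =>
      if (K <? s)%nat then
        let tl := t_round K N s epsl deltal in
        (s * (tl - tprev) +
         me_pulls f K N (s - (s - K + 1) / 2) (3 / 4 * epsl) (deltal / 2) tl)%nat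
      else O
  end.

Definition total_pulls (K N n : nat) (eps delta : R) : nat :=
  me_pulls n K N n (eps / 4) (delta / 2) O.

(* In a round with |S_l| = s > K, every arm is pulled at most t_l times, and
   m(u) <= 2 sqrt(u N) gives t_l <= 4 h_l with h_l = sqrt N sqrt(ln (4/delta_l)) / eps_l.
   From one round to the next the excess s - K at least halves while h_l grows
   by at most 3/2, so the costs form a geometric series of ratio 3/4 and the
   total is at most 16 (K + 1) (n - K) h_1 = O(n sqrt N sqrt(ln (1/delta)) / eps). *)
From Stdlib Require Import Reals Lra Lia ZArith.
Open Scope R_scope.

Lemma ln_le x y : 0 < x -> x <= y -> ln x <= ln y.
Proof. intros Hx [Hxy | <-]; [left; now apply ln_increasing | lra]. Qed.

Lemma sqrt_le_of_le_sqr x y : 0 <= y -> x <= y * y -> sqrt x <= y.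
Proof. intros Hy Hxy. rewrite <- (sqrt_square y Hy). now apply sqrt_le_1_alt. Qed.

Lemma le_div_of_mul_le a b d : 0 < d -> a * d <= b -> a <= b / d.
Proof.
  intros Hd Hab. apply Rmult_le_reg_r with d; [exact Hd |].
  unfold Rdiv. rewrite Rmult_assoc, Rinv_l, Rmult_1_r; lra.
Qed.

Lemma IZR_ceilZ_le x : IZR (ceilZ x) <= x + 1.
Proof.
  unfold ceilZ. destruct (archimed x) as [_ Hup].
  destruct (Req_EM_T (IZR (up x) - 1) x); [rewrite minus_IZR |]; lra.
Qed.

Lemma INR_to_nat_ceilZ_le x : -1 <= x -> INR (Z.to_nat (ceilZ x)) <= x + 1.
Proof.
  intros Hx. pose proof (IZR_ceilZ_le x) as Hc.
  destruct (Z.le_gt_cases 0 (ceilZ x)) as [Hz | Hz].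
  - now rewrite INR_IZR_INZ, Z2Nat.id.
  - replace (Z.to_nat (ceilZ x)) with 0%nat by lia. simpl; lra.
Qed.

Lemma m_fun_nonneg N u : (0 < N)%nat -> 0 <= u -> 0 <= m_fun N u.
Proof.
  intros HN Hu. assert (0 < INR N) by (apply lt_0_INR; lia).
  assert (0 <= u / INR N) by (apply Rle_mult_inv_pos; lra).
  unfold m_fun. apply Rmin_glb; apply Rle_mult_inv_pos; lra.
Qed.

Lemma m_fun_le_sqrt N u : (0 < N)%nat -> 0 <= u -> m_fun N u <= 2 * sqrt (u * INR N).
Proof.
  intros HN Hu. unfold m_fun. eapply Rle_trans; [apply Rmin_r |].
  assert (HN1 : 1 <= INR N) by (apply (le_INR 1); lia).
  rewrite sqrt_mult by lra.
  assert (Hb : 1 <= sqrt (INR N)) by (rewrite <- sqrt_1; apply sqrt_le_1_alt; lra).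
  pose proof (sqrt_sqrt u Hu) as Ea. pose proof (sqrt_sqrt (INR N) ltac:(lra)) as Eb.
  pose proof (sqrt_pos u) as Ha.
  set (a := sqrt u) in *; set (b := sqrt (INR N)) in *; clearbody a b.
  rewrite <- Ea, <- Eb.
  replace ((a * a + a * a / (b * b)) / (1 + a * a / (b * b)))
    with (a * a * (b * b + 1) / (b * b + a * a)) by (field; nra).
  apply Rmult_le_reg_r with (b * b + a * a); [nra |].
  unfold Rdiv. rewrite Rmult_assoc, Rinv_l by nra.
  (* 2ab(a^2 + b^2) - a^2(b^2 + 1) = 2ab(a - b)^2 + a^2(3b^2 - 1) *)
  assert (0 <= a * b * ((a - b) * (a - b))).
  { apply Rmult_le_pos; [apply Rmult_le_pos; lra | apply Rle_0_sqr]. }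
  assert (0 <= a * a * (3 * (b * b) - 1)).
  { apply Rmult_le_pos; [apply Rle_0_sqr | nra]. }
  nra.
Qed.

Lemma halving_ratio_bounds k : (0 < k)%nat -> 1 <= 2 * INR k / INR (k / 2 + 1) <= 4.
Proof.
  intros Hk. pose proof (Nat.div_mod_eq k 2). pose proof (Nat.mod_upper_bound k 2).
  assert (Hlo : (k / 2 + 1 <= 2 * k)%nat) by lia.
  assert (Hhi : (k <= 2 * (k / 2 + 1))%nat) by lia.
  apply le_INR in Hlo, Hhi. rewrite mult_INR in Hlo, Hhi. simpl (INR 2) in Hlo, Hhi.
  assert (Hy : 0 < INR (k / 2 + 1)) by (apply lt_0_INR; lia).
  set (y := INR (k / 2 + 1)) in *. clearbody y.
  split; apply Rmult_le_reg_r with y; try assumption;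
    unfold Rdiv; rewrite Rmult_assoc, Rinv_l by lra; lra.
Qed.

Lemma round_log_bounds K s d : (K < s)%nat -> 0 < d <= 1 ->
  0 <= ln (2 * INR (s - K) / (d * INR ((s - K) / 2 + 1))) <= ln (4 / d).
Proof.
  intros Hs Hd.
  destruct (halving_ratio_bounds (s - K) ltac:(lia)) as [Hr1 Hr4].
  assert (0 < INR ((s - K) / 2 + 1)) by (apply lt_0_INR; lia).
  replace (2 * INR (s - K) / (d * INR ((s - K) / 2 + 1)))
    with (2 * INR (s - K) / INR ((s - K) / 2 + 1) / d) by (field; lra).
  set (r := 2 * INR (s - K) / INR ((s - K) / 2 + 1)) in *. clearbody r.
  assert (r / d <= 4 / d) by (apply Rmult_le_compat_r; [left; apply Rinv_0_lt_compat |]; lra).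
  assert (1 <= r / d) by (apply le_div_of_mul_le; lra).
  rewrite <- ln_1. split; apply ln_le; lra.
Qed.

Definition round_scale (N : nat) (e d : R) : R := sqrt (INR N) * sqrt (ln (4 / d)) / e.

Lemma round_scale_nonneg N e d : 0 < e -> 0 <= round_scale N e d.
Proof.
  intros He. apply Rle_mult_inv_pos; [apply Rmult_le_pos; apply sqrt_pos | exact He].
Qed.

Lemma ln_4_div_ge d : 0 < d <= 1 / 4 -> 4 * ln 2 <= ln (4 / d).
Proof.
  intros Hd. replace (4 * ln 2) with (ln (2 * 2 * 2 * 2)) by (rewrite !ln_mult by lra; ring).
  apply ln_le; [lra |]. apply le_div_of_mul_le; lra.
Qed.

Lemma t_round_le K N s e d : (K < s)%nat -> (1 < N)%nat -> 0 < e <= 1 -> 0 < d <= 1 / 4 ->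
  INR (t_round K N s e d) <= 4 * round_scale N e d.
Proof.
  intros Hs HN He Hd. unfold t_round, round_scale.
  destruct (round_log_bounds K s d Hs ltac:(lra)) as [HL0 HLG].
  set (L := ln (2 * INR (s - K) / _)) in *. clearbody L.
  assert (HG : 1 <= ln (4 / d)) by (pose proof (ln_4_div_ge d Hd); pose proof ln_lt_2; lra).
  set (G := ln (4 / d)) in *. clearbody G.
  assert (HN1 : 1 <= INR N) by (apply (le_INR 1); lia).
  assert (He2 : 0 < e ^ 2) by (apply pow_lt; lra).
  set (u := 2 / e ^ 2 * L).
  assert (Hu : 0 <= u) by (apply Rmult_le_pos; [apply Rle_mult_inv_pos |]; lra).
  pose proof (m_fun_le_sqrt N u ltac:(lia) Hu) as Hm.
  eapply Rle_trans; [apply INR_to_nat_ceilZ_le; pose proof (m_fun_nonneg N u ltac:(lia) Hu); lra |].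
  assert (Hb : 1 <= sqrt (INR N)) by (rewrite <- sqrt_1; apply sqrt_le_1_alt; lra).
  assert (Hw : 1 <= sqrt G) by (rewrite <- sqrt_1; apply sqrt_le_1_alt; lra).
  pose proof (sqrt_sqrt (INR N) ltac:(lra)) as Eb. pose proof (sqrt_sqrt G ltac:(lra)) as Ew.
  set (b := sqrt (INR N)) in *; set (w := sqrt G) in *; clearbody b w.
  rewrite <- Eb in Hm.
  assert (Hscale : 1 <= b * w / e) by (apply le_div_of_mul_le; nra).
  assert (Hsqrt : sqrt (u * (b * b)) <= 3 / 2 * (b * w / e)).
  { apply sqrt_le_of_le_sqr; [lra |].
    replace (u * (b * b)) with (2 * L * (b * b) / e ^ 2) by (unfold u; field; lra).
    replace (3 / 2 * (b * w / e) * (3 / 2 * (b * w / e)))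
      with (9 / 4 * (w * w) * (b * b) / e ^ 2) by (field; lra).
    apply Rmult_le_compat_r; [left; apply Rinv_0_lt_compat; lra | nra]. }
  lra.
Qed.

Lemma round_scale_step N e d : 0 < e -> 0 < d <= 1 / 4 ->
  round_scale N (3 / 4 * e) (d / 2) <= 3 / 2 * round_scale N e d.
Proof.
  intros He Hd. unfold round_scale.
  pose proof (ln_4_div_ge d Hd) as HG. pose proof ln_lt_2.
  replace (4 / (d / 2)) with (2 * (4 / d)) by (field; lra).
  rewrite ln_mult by (try apply Rdiv_lt_0_compat; lra).
  (* ln 2 <= ln (4/d) / 4, so ln (8/d) <= (9/8)^2 ln (4/d) *)
  assert (Hw : sqrt (ln 2 + ln (4 / d)) <= 9 / 8 * sqrt (ln (4 / d))).
  { apply sqrt_le_of_le_sqr; [apply Rmult_le_pos; [lra | apply sqrt_pos] |].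
    replace (9 / 8 * sqrt (ln (4 / d)) * (9 / 8 * sqrt (ln (4 / d))))
      with (81 / 64 * (sqrt (ln (4 / d)) * sqrt (ln (4 / d)))) by field.
    rewrite sqrt_sqrt; lra. }
  replace (3 / 2 * (sqrt (INR N) * sqrt (ln (4 / d)) / e))
    with (sqrt (INR N) * (9 / 8 * sqrt (ln (4 / d))) / (3 / 4 * e)) by (field; lra).
  apply Rmult_le_compat_r; [left; apply Rinv_0_lt_compat; lra |].
  apply Rmult_le_compat_l; [apply sqrt_pos | exact Hw].
Qed.

Lemma round_scale_initial N eps delta : 0 < eps -> 0 < delta <= 1 / 2 ->
  round_scale N (eps / 4) (delta / 2) <= 8 * (sqrt (INR N) / eps) * sqrt (ln (1 / delta)).
Proof.
  intros He Hd. unfold round_scale. pose proof ln_lt_2.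
  assert (H2 : ln 2 <= ln (1 / delta)) by (apply ln_le; [lra | apply le_div_of_mul_le; lra]).
  replace (4 / (delta / 2)) with (2 * 2 * 2 * (1 / delta)) by (field; lra).
  rewrite !ln_mult by (try apply Rdiv_lt_0_compat; lra).
  assert (Hw : sqrt (ln 2 + ln 2 + ln 2 + ln (1 / delta)) <= 2 * sqrt (ln (1 / delta))).
  { apply sqrt_le_of_le_sqr; [apply Rmult_le_pos; [lra | apply sqrt_pos] |].
    replace (2 * sqrt (ln (1 / delta)) * (2 * sqrt (ln (1 / delta))))
      with (4 * (sqrt (ln (1 / delta)) * sqrt (ln (1 / delta)))) by field.
    rewrite sqrt_sqrt; lra. }
  replace (8 * (sqrt (INR N) / eps) * sqrt (ln (1 / delta)))
    with (sqrt (INR N) * (2 * sqrt (ln (1 / delta))) / (eps / 4)) by (field; lra).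
  apply Rmult_le_compat_r; [left; apply Rinv_0_lt_compat; lra |].
  apply Rmult_le_compat_l; [apply sqrt_pos | exact Hw].
Qed.

Lemma me_pulls_le K N fuel : (1 < N)%nat -> forall s e d tprev,
  0 < e <= 1 -> 0 < d <= 1 / 4 ->
  INR (me_pulls fuel K N s e d tprev) <= 16 * (INR K + 1) * INR (s - K) * round_scale N e d.
Proof.
  intros HN. pose proof (pos_INR K) as HK.
  induction fuel as [| fuel IH]; intros s e d tprev He Hd; cbn [me_pulls];
    pose proof (round_scale_nonneg N e d ltac:(lra)) as Hh; pose proof (pos_INR (s - K)).
  { simpl. apply Rmult_le_pos; [apply Rmult_le_pos |]; lra. }
  destruct (Nat.ltb_spec K s) as [Hs | Hs].
  2: { simpl. apply Rmult_le_pos; [apply Rmult_le_pos |]; lra. }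
  set (tl := t_round K N s e d). set (s' := (s - (s - K + 1) / 2)%nat).
  pose proof (t_round_le K N s e d Hs HN He Hd) as Ht. fold tl in Ht.
  pose proof (IH s' (3 / 4 * e) (d / 2) tl ltac:(lra) ltac:(lra)) as Hrest.
  pose proof (round_scale_step N e d ltac:(lra) Hd) as Hstep.
  assert (Harms : (s <= (K + 1) * (s - K))%nat) by nia.
  assert (Hhalf : (2 * (s' - K) <= s - K)%nat).
  { unfold s'. pose proof (Nat.div_mod_eq (s - K + 1) 2).
    pose proof (Nat.mod_upper_bound (s - K + 1) 2). lia. }
  assert (Hnew : (tl - tprev <= tl)%nat) by lia.
  apply le_INR in Harms, Hhalf, Hnew.
  rewrite mult_INR, plus_INR in Harms. rewrite mult_INR in Hhalf. simpl (INR 1) in Harms.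
  simpl (INR 2) in Hhalf. rewrite plus_INR, mult_INR.
  pose proof (pos_INR (s' - K)). pose proof (pos_INR tl).
  pose proof (round_scale_nonneg N (3 / 4 * e) (d / 2) ltac:(lra)).
  set (h := round_scale N e d) in *. set (h' := round_scale N (3 / 4 * e) (d / 2)) in *.
  assert (Hround : INR s * INR (tl - tprev) <= (INR K + 1) * INR (s - K) * (4 * h)).
  { apply Rmult_le_compat; try apply pos_INR; lra. }
  assert (Hlater : 16 * (INR K + 1) * INR (s' - K) * h'
                   <= 16 * (INR K + 1) * (INR (s - K) / 2) * (3 / 2 * h)).
  { apply Rmult_le_compat; [apply Rmult_le_pos | | apply Rmult_le_compat_l |]; lra. }
  lra.
Qed.

Theorem corollary3 (K : nat) (HK : (1 <= K)%nat) :
  exists C : R,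
    forall (n N : nat) (eps delta : R),
      (K <= n)%nat -> (1 < N)%nat ->
      0 < eps < 1 -> 0 < delta <= 1 / 2 ->
      INR (total_pulls K N n eps delta)
        <= C * (INR n * sqrt (INR N) / eps) * sqrt (ln (1 / delta)).
Proof.
  exists (128 * (INR K + 1)).
  intros n N eps delta Hn HN He Hd. unfold total_pulls.
  eapply Rle_trans; [apply me_pulls_le; [exact HN | lra | lra] |].
  pose proof (round_scale_initial N eps delta ltac:(lra) Hd) as Hinit.
  pose proof (round_scale_nonneg N (eps / 4) (delta / 2) ltac:(lra)).
  assert (Hexcess : INR (n - K) <= INR n) by (apply le_INR; lia).
  pose proof (pos_INR K). pose proof (pos_INR (n - K)).
  replace (128 * (INR K + 1) * (INR n * sqrt (INR N) / eps) * sqrt (ln (1 / delta)))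
    with (16 * (INR K + 1) * INR n * (8 * (sqrt (INR N) / eps) * sqrt (ln (1 / delta))))
    by (field; lra).
  apply Rmult_le_compat; [apply Rmult_le_pos | | apply Rmult_le_compat_l |]; lra.
Qed.
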